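(* Let $\mathcal{L}_{\rm F}$ be the Fibonacci language and let ${\rm S}:\mathcal{L}_{\rm F}\to\mathbb{N}$ be a homomorphism. If ${\rm S}(0)=1$ and ${\rm S}(1)\le3$, or if ${\rm S}(0)=2$ and ${\rm S}(1)=1$, then ${\rm S}(\mathcal{L}_{\rm F})=\mathbb{N}$.
   Context: $\mathbb{N}=\{1,2,3,\dots\}$ and $[x]$ denotes the integer part (floor) of $x$. Let $\Phi=(1+\sqrt5)/2$ and $\alpha=2-\Phi$. The characteristic word $c_\alpha=(c_\alpha(n))_{n\ge0}$ is the infinite word over $\{0,1\}$ with $c_\alpha(n)=[(n+2)\alpha]-[(n+1)\alpha]$ (the infinite Fibonacci word). The Fibonacci language $\mathcal{L}_{\rm F}$ is the set of all nonempty finite words occurring as factors of $c_\alpha$. A homomorphism ${\rm S}:\mathcal{L}_{\rm F}\to\mathbb{N}$ is a map with ${\rm S}(w_1\cdots w_n)={\rm S}(w_1)+\cdots+{\rm S}(w_n)$, determined by ${\rm S}(0),{\rm S}(1)\in\mathbb{N}$. *)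

From Stdlib Require Import Reals ZArith List.
Import ListNotations.
Open Scope R_scope.

Definition Phi : R := (1 + sqrt 5) / 2.
Definition alpha : R := 2 - Phi.

Definition floorR (x : R) : Z := Int_part x.

Definition c_alpha (n : nat) : Z :=
  (floorR ((INR n + 2) * alpha) - floorR ((INR n + 1) * alpha))%Z.

(* Fibonacci language: nonempty finite words (over letters 0/1, encoded
   as integers) occurring as factors of c_alpha. *)
Definition in_LF (w : list Z) : Prop :=
  w <> [] /\ exists i : nat, forall k : nat, (k < length w)%nat ->
    nth k w 0%Z = c_alpha (i + k).

Definition S_letter (s0 s1 : nat) (a : Z) : nat :=
  if Z.eqb a 0 then s0 else s1.
Definition S_hom (s0 s1 : nat) (w : list Z) : nat :=
  fold_right (fun a acc => (S_letter s0 s1 a + acc)%nat) 0%nat w.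

(* The values of S on factors are the differences P j - P i (i < j) of the
   prefix sums P of the weighted Fibonacci word, and every n >= 1 satisfies
   P k <= n < P (k + 1) for some k.  If n = P k, the prefix of length k works.
   Otherwise n falls strictly inside the gap left by a letter of weight 2 or 3.
   Since the word starts with 0100 and has no factor 11, the one or two letters
   after that letter are constrained enough that some window ending there and
   starting after a short prefix of the word has weight exactly n. *)

From Stdlib Require Import Reals ZArith List Lra Lia Psatz.
Import ListNotations.
Open Scope R_scope.

Lemma floorR_bounds x : IZR (floorR x) <= x < IZR (floorR x) + 1.
Proof. unfold floorR. destruct (base_Int_part x). lra. Qed.

Lemma floorR_unique x z : IZR z <= x < IZR z + 1 -> floorR x = z.
Proof.
  intros [Hzx Hxz]. destruct (floorR_bounds x) as [Hfx Hxf].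
  assert (Hf : IZR (floorR x) < IZR (z + 1)) by (rewrite plus_IZR; lra).
  assert (Hz : IZR z < IZR (floorR x + 1)) by (rewrite plus_IZR; lra).
  apply lt_IZR in Hf. apply lt_IZR in Hz. lia.
Qed.

Lemma alpha_bounds : 1/3 < alpha < 2/5.
Proof.
  unfold alpha, Phi.
  assert (H5 : sqrt 5 * sqrt 5 = 5) by (apply sqrt_sqrt; lra).
  assert (H0 : 0 <= sqrt 5) by apply sqrt_pos.
  split; nra.
Qed.

Lemma c_alpha_0 : c_alpha 0 = 0%Z.
Proof.
  pose proof alpha_bounds. unfold c_alpha. simpl INR.
  rewrite (floorR_unique _ 0), (floorR_unique _ 0); try reflexivity; simpl IZR; lra.
Qed.

Lemma c_alpha_1 : c_alpha 1 = 1%Z.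
Proof.
  pose proof alpha_bounds. unfold c_alpha. simpl INR.
  rewrite (floorR_unique _ 1), (floorR_unique _ 0); try reflexivity; simpl IZR; lra.
Qed.

Lemma c_alpha_2 : c_alpha 2 = 0%Z.
Proof.
  pose proof alpha_bounds. unfold c_alpha. simpl INR.
  rewrite (floorR_unique _ 1), (floorR_unique _ 1); try reflexivity; simpl IZR; lra.
Qed.

Lemma c_alpha_3 : c_alpha 3 = 0%Z.
Proof.
  pose proof alpha_bounds. unfold c_alpha. simpl INR.
  rewrite (floorR_unique _ 1), (floorR_unique _ 1); try reflexivity; simpl IZR; lra.
Qed.

(* Since 2 alpha < 1, the floors of (k+1) alpha and (k+3) alpha differ by at
   most 1, so two consecutive letters cannot both be 1. *)
Lemma c_alpha_no_11 k : c_alpha k <> 0%Z -> c_alpha (S k) = 0%Z.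
Proof.
  intros Hk. pose proof alpha_bounds. unfold c_alpha in *. rewrite S_INR.
  replace (INR k + 1 + 1) with (INR k + 2) by ring.
  assert (0 <= INR k) by apply pos_INR.
  destruct (floorR_bounds ((INR k + 1) * alpha)).
  destruct (floorR_bounds ((INR k + 2) * alpha)).
  destruct (floorR_bounds ((INR k + 1 + 2) * alpha)).
  set (a := floorR ((INR k + 1) * alpha)) in *.
  set (b := floorR ((INR k + 2) * alpha)) in *.
  set (d := floorR ((INR k + 1 + 2) * alpha)) in *.
  assert (Hab : IZR a < IZR (b + 1)) by (rewrite plus_IZR; nra).
  assert (Hbd : IZR b < IZR (d + 1)) by (rewrite plus_IZR; nra).
  assert (Hda : IZR d < IZR (a + 2)) by (rewrite plus_IZR; nra).
  apply lt_IZR in Hab. apply lt_IZR in Hbd. apply lt_IZR in Hda. lia.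
Qed.

Close Scope R_scope.

Lemma S_hom_pos s0 s1 w :
  1 <= s0 -> 1 <= s1 -> w <> [] -> 1 <= S_hom s0 s1 w.
Proof.
  intros H0 H1 Hw. destruct w as [|a w]; [congruence|].
  simpl. unfold S_letter. destruct (Z.eqb a 0); lia.
Qed.

Lemma in_LF_factor i L : 0 < L -> in_LF (map c_alpha (seq i L)).
Proof.
  intros HL. split.
  - destruct L; [lia|]. discriminate.
  - exists i. intros k Hk. rewrite length_map, length_seq in Hk.
    rewrite nth_indep with (d' := c_alpha 0) by now rewrite length_map, length_seq.
    now rewrite map_nth, seq_nth.
Qed.

Section PrefixSums.

Variables s0 s1 : nat.

Definition weight (k : nat) : nat := S_letter s0 s1 (c_alpha k).

Fixpoint prefix_sum (k : nat) : nat :=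
  match k with
  | 0 => 0
  | S k' => prefix_sum k' + weight k'
  end.

Lemma weight_letter0 k : c_alpha k = 0%Z -> weight k = s0.
Proof. intros Hk. unfold weight, S_letter. now rewrite Hk. Qed.

Lemma weight_letter1 k : c_alpha k <> 0%Z -> weight k = s1.
Proof. intros Hk. unfold weight, S_letter. now rewrite (proj2 (Z.eqb_neq _ _) Hk). Qed.

Lemma prefix_sum_add_factor i L :
  prefix_sum i + S_hom s0 s1 (map c_alpha (seq i L)) = prefix_sum (i + L).
Proof.
  revert i; induction L as [|L IHL]; intros i; simpl.
  - now rewrite !Nat.add_0_r.
  - rewrite <- Nat.add_succ_comm, <- IHL. simpl. fold (weight i). lia.
Qed.

Lemma prefix_sum_diff_value i j n :
  i < j -> prefix_sum i + n = prefix_sum j ->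
  exists w, in_LF w /\ S_hom s0 s1 w = n.
Proof.
  intros Hij Hn. exists (map c_alpha (seq i (j - i))). split.
  - apply in_LF_factor. lia.
  - pose proof (prefix_sum_add_factor i (j - i)) as Hf.
    replace (i + (j - i)) with j in Hf by lia. lia.
Qed.

Lemma prefix_sum_bracket n :
  1 <= s0 -> 1 <= s1 -> exists k, prefix_sum k <= n < prefix_sum (S k).
Proof.
  intros H0 H1.
  assert (Hw : forall k, 1 <= weight k)
    by (intros k; unfold weight, S_letter; destruct (Z.eqb _ _); lia).
  induction n as [|n [k Hk]].
  - exists 0. specialize (Hw 0). simpl. lia.
  - destruct (Nat.eq_dec (S n) (prefix_sum (S k))) as [Heq|Hne].
    + exists (S k). specialize (Hw (S k)). simpl in *. lia.
    + exists k. lia.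
Qed.

Lemma gap_value_letter0 k n :
  s0 = 2 -> s1 = 1 -> c_alpha k = 0%Z -> n = prefix_sum k + 1 ->
  exists w, in_LF w /\ S_hom s0 s1 w = n.
Proof.
  intros Hs0 Hs1 Hk ->.
  assert (Hw0 := weight_letter0 0 c_alpha_0).
  assert (Hw1 := weight_letter1 1 ltac:(rewrite c_alpha_1; discriminate)).
  destruct (Z.eq_dec (c_alpha (S k)) 0) as [Hk1|Hk1].
  - destruct k as [|k]; [rewrite c_alpha_1 in Hk1; discriminate|].
    apply (prefix_sum_diff_value 2 (S (S (S k)))); [lia|].
    simpl prefix_sum. rewrite (weight_letter0 _ Hk), (weight_letter0 _ Hk1). lia.
  - apply (prefix_sum_diff_value 1 (S (S k))); [lia|].
    simpl prefix_sum. rewrite (weight_letter0 _ Hk), (weight_letter1 _ Hk1). lia.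
Qed.

Lemma gap_value_letter1 k n :
  s0 = 1 -> s1 <= 3 -> c_alpha k <> 0%Z ->
  prefix_sum k < n < prefix_sum k + s1 ->
  exists w, in_LF w /\ S_hom s0 s1 w = n.
Proof.
  intros Hs0 Hs1 Hk Hn.
  assert (Hw0 := weight_letter0 0 c_alpha_0).
  assert (Hw1 := weight_letter1 1 ltac:(rewrite c_alpha_1; discriminate)).
  assert (Hw2 := weight_letter0 2 c_alpha_2).
  assert (Hw3 := weight_letter0 3 c_alpha_3).
  assert (Hk1 := weight_letter0 _ (c_alpha_no_11 k Hk)).
  assert (Hwk := weight_letter1 k Hk).
  destruct k as [|k]; [rewrite c_alpha_0 in Hk; congruence|].
  destruct (Nat.eq_dec n (prefix_sum (S k) + s1 - 1)) as [Hn1|Hn1].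
  { apply (prefix_sum_diff_value 1 (S (S k))); [lia|].
    simpl prefix_sum in *. lia. }
  assert (s1 = 3 /\ n = prefix_sum (S k) + 1) as [Hs1' ->] by lia.
  destruct (Z.eq_dec (c_alpha (S (S (S k)))) 0) as [Hk2|Hk2].
  - apply (prefix_sum_diff_value 2 (S (S (S (S k))))); [lia|].
    simpl prefix_sum in *. rewrite (weight_letter0 _ Hk2). lia.
  - destruct k as [|k]; [rewrite c_alpha_3 in Hk2; congruence|].
    apply (prefix_sum_diff_value 4 (S (S (S (S (S k)))))); [lia|].
    simpl prefix_sum in *. rewrite (weight_letter1 _ Hk2). lia.
Qed.

End PrefixSums.

Theorem lemma5 (s0 s1 : nat) (h0 : (1 <= s0)%nat) (h1 : (1 <= s1)%nat)
  (hS : (s0 = 1 /\ s1 <= 3)%nat \/ (s0 = 2 /\ s1 = 1)%nat) :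
  forall n : nat, (exists w, in_LF w /\ S_hom s0 s1 w = n) <-> (1 <= n)%nat.
Proof.
  intros n. split.
  - intros [w [[Hw _] <-]]. now apply S_hom_pos.
  - intros Hn. destruct (prefix_sum_bracket s0 s1 n h0 h1) as [k Hk].
    destruct (Nat.eq_dec (prefix_sum s0 s1 k) n) as [Heq|Hne].
    + destruct k as [|k]; [simpl in Heq; lia|].
      apply (prefix_sum_diff_value s0 s1 0 (S k)); [lia|]. now rewrite <- Heq.
    + simpl in Hk. unfold weight, S_letter in Hk.
      destruct (Z.eqb_spec (c_alpha k) 0) as [Hc|Hc].
      * apply (gap_value_letter0 s0 s1 k); [lia..|assumption|lia].
      * apply (gap_value_letter1 s0 s1 k); [lia..|assumption|lia].
Qed.
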